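(* Let $G$ be an undirected graph on vertex set $[m]$ with symmetric adjacency matrix $\mathcal{A}\in\{0,1\}^{m\times m}$, each vertex $i$ having a single attribute value $a_i\in[K]$ with one-hot encoding $h_i\in\{0,1\}^K$. Let $W\in\mathbb{R}^{r\times K}$, $f_i=Wh_i$, let $S:\mathbb{R}^r\times\mathbb{R}^r\to\mathbb{R}$ be any function, and let $\mathbf{S}\in\mathbb{R}^{m\times m}$ have entries $\mathbf{S}_{ji}=S(f_j,f_i)$. Let $F_{(1)}\in\mathbb{R}^{r\times m}$ be the matrix with columns $f_1,\dots,f_m$, and for $n\ge2$ let $F_{(n)}=\big(F_{(n-1)}(\mathcal{A}\odot\mathbf{S})\big)\odot F_{(1)}$; let $f_{(n)}=F_{(n)}\mathbf{1}$ with $\mathbf{1}\in\mathbb{R}^m$ the all-ones vector. Then for every $n\ge1$, $$f_{(n)}=W^{[n]}\,\Lambda_{(n)}\,c_{(n)}(G),$$ and consequently, for every $T\ge1$, $f_{[T]}=\mathcal{M}\Lambda c_{[T]}(G)$, where $f_{[T]}$ is the concatenation $[f_{(1)};\dots;f_{(T)}]$, $c_{[T]}$ is the concatenation $[c_{(1)};\dots;c_{(T)}]$, $\mathcal{M}$ is block-diagonal with diagonal blocks $W^{[1]},\dots,W^{[T]}$, and $\Lambda$ is block-diagonal with diagonal blocks $\Lambda_{(1)},\dots,\Lambda_{(T)}$.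
   Context: For $u\in[K]$ let $W(u)$ be the $u$-th column of $W$. A walk of length $n$ is a sequence of vertices $(p_1,\dots,p_n)$ with $\mathcal{A}_{p_k,p_{k+1}}=1$ for all $k<n$; its walk type is $(a_{p_1},\dots,a_{p_n})\in[K]^n$. The walk statistics vector $c_{(n)}(G)\in\mathbb{R}^{K^n}$ has entries indexed by walk types $v\in[K]^n$, the entry at $v$ being the number of walks of length $n$ in $G$ of type $v$. The walk weight of $v=(v_1,\dots,v_n)$ is $\lambda(v)=\prod_{k=1}^{n-1}S\big(W(v_{k+1}),W(v_k)\big)$ (equal to $1$ if $n=1$); $\Lambda_{(n)}$ is the $K^n\times K^n$ diagonal matrix with diagonal entry $\lambda(v)$ at index $v$. For a $d\times N$ matrix $A$ with columns $A_1,\dots,A_N$, its $\ell$-way column product $A^{[\ell]}$ is the $d\times N^\ell$ matrix whose column indexed by $(i_1,\dots,i_\ell)\in[N]^\ell$ is $A_{i_1}\odot\cdots\odot A_{i_\ell}$. $\odot$ denotes the entrywise product; the index orderings of $c_{(n)}$, $\Lambda_{(n)}$ and the columns of $W^{[n]}$ are the same. *)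

From HB Require Import structures.
From mathcomp Require Import all_boot all_order all_algebra.
Set Implicit Arguments. Unset Strict Implicit. Unset Printing Implicit Defensive.
Import Order.TTheory GRing.Theory Num.Theory.
Local Open Scope ring_scope.

Section Defs.
Variable R : realFieldType.

Definition hadamard (p q : nat) (X Y : 'M[R]_(p, q)) : 'M[R]_(p, q) :=
  \matrix_(i, j) (X i j * Y i j).

(* number of elements of [N]^n, indexed via enum_val of the finType n.-tuple 'I_N *)
Definition ntup (n N : nat) : nat := #|{: n.-tuple 'I_N}|.

(* l-way column product A^[l] of a d x N matrix: the column indexed by
   (i_1,...,i_l) (= enum_val j) is A_{i_1} ⊙ ... ⊙ A_{i_l} *)
Definition colprod (d N : nat) (X : 'M[R]_(d, N)) (l : nat) : 'M[R]_(d, ntup l N) :=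
  \matrix_(p, j) \prod_(k < l) X p (tnth (enum_val j) k).

Variables (m K r : nat).
Variable (Adj : 'M[R]_m) (a : 'I_m -> 'I_K) (W : 'M[R]_(r, K))
         (S : 'cV[R]_r -> 'cV[R]_r -> R).

Definition onehot (i : 'I_m) : 'cV[R]_K := \col_k (k == a i)%:R.
Definition feat (i : 'I_m) : 'cV[R]_r := W *m onehot i.

Definition F1 : 'M[R]_(r, m) := \matrix_(p, i) feat i p 0.
Definition Smat : 'M[R]_m := \matrix_(j, i) S (feat j) (feat i).

(* Fiter k = F_(k+1) *)
Fixpoint Fiter (k : nat) : 'M[R]_(r, m) :=
  if k is k'.+1 then hadamard (Fiter k' *m hadamard Adj Smat) F1 else F1.
Definition Fn (n : nat) : 'M[R]_(r, m) := Fiter n.-1.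

Definition fvec (n : nat) : 'cV[R]_r := Fn n *m const_mx 1.

Definition is_walk (n : nat) (p : n.-tuple 'I_m) : bool :=
  [forall i : 'I_n, forall j : 'I_n,
     (nat_of_ord j == (nat_of_ord i).+1) ==> (Adj (tnth p i) (tnth p j) == 1)].

Definition walk_type (n : nat) (p : n.-tuple 'I_m) : n.-tuple 'I_K :=
  [tuple a (tnth p k) | k < n].

Definition cvec (n : nat) : 'cV[R]_(ntup n K) :=
  \col_j (#|[set p : n.-tuple 'I_m | is_walk p && (walk_type p == enum_val j)]|)%:R.

Definition walk_weight (n : nat) (v : n.-tuple 'I_K) : R :=
  \prod_(i < n) \prod_(j < n | nat_of_ord j == (nat_of_ord i).+1)
     S (col (tnth v j) W) (col (tnth v i) W).

Definition Lam (n : nat) : 'M[R]_(ntup n K) :=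
  diag_mx (\row_j walk_weight (enum_val j)).

End Defs.

Definition bdiag (R : realFieldType) (T : nat) (p q : 'I_T -> nat)
  (B : forall i : 'I_T, 'M[R]_(p i, q i)) : 'M[R]_(\sum_(i < T) p i, \sum_(i < T) q i) :=
  @mxblock R T T p q (fun i j =>
     match i =P j with
     | ReflectT e => castmx (erefl (p i), congr1 q e) (B i)
     | ReflectF _ => 0
     end).

(** Unfolding the recursion for [F_(n)] expresses the [p]-th entry of [f_(n)]
    as a sum over all sequences [(p_1, ..., p_n)] of vertices of
    [A_{p_1 p_2} ... A_{p_{n-1} p_n}] times the product of the weights
    [S(f_{p_{k+1}}, f_{p_k})] and of the entries [W_{p, a_{p_k}}].  Since [A] is
    a 0/1 matrix the first factor is the indicator of being a walk, and the
    other two depend only on the walk type [v], where they equal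
    [lambda(v) (W^[n])_{p v}].  Grouping the walks by type gives
    [f_(n) = W^[n] Lambda_(n) c_(n)(G)]; the concatenated identity is this one
    read block by block. *)

From HB Require Import structures.
From mathcomp Require Import all_boot all_order all_algebra.
From mathcomp Require Import ring.
Set Implicit Arguments. Unset Strict Implicit. Unset Printing Implicit Defensive.
Import Order.TTheory GRing.Theory Num.Theory.
Local Open Scope ring_scope.

Section ChainProduct.
Variables (R : comPzSemiRingType) (T : Type).

Fixpoint chain_prod (c : T -> T -> R) (s : seq T) : R :=
  if s is x :: s' then
    if s' is y :: _ then c x y * chain_prod c s' else 1
  else 1.

Lemma chain_prod_cons2 c x y s :
  chain_prod c [:: x, y & s] = c x y * chain_prod c (y :: s).
Proof. by []. Qed.

Lemma chain_prodM c d s :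
  chain_prod (fun x y => c x y * d x y) s = chain_prod c s * chain_prod d s.
Proof.
elim: s => [|x [|y s] IH]; rewrite /= ?mulr1 //.
by rewrite -/(chain_prod _ (y :: s)) IH mulrACA.
Qed.

Lemma chain_prod_nth x0 c s :
  \prod_(i < size s) \prod_(j < size s | val j == (val i).+1)
     c (nth x0 s i) (nth x0 s j) = chain_prod c s.
Proof.
elim: s => [|x s IH]; first by rewrite big_ord0.
have tail_prod : \prod_(i < size s) \prod_(j < (size s).+1 | val j == (val i).+2)
    c (nth x0 s i) (nth x0 (x :: s) j) = chain_prod c s.
  rewrite -IH; apply: eq_bigr => i _.
  by rewrite big_mkcond big_ord_recl /= mul1r [RHS]big_mkcond.
rewrite big_ord_recl [X in _ * X]tail_prod.
case: s {IH tail_prod} => [|y s]; first by rewrite big_pred0 ?mul1r // => -[[|[|j]] ?].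
by rewrite big_mkcond !big_ord_recl /= mul1r big1 ?mulr1.
Qed.

Lemma chain_prod_tnth n c (t : n.-tuple T) :
  \prod_(i < n) \prod_(j < n | val j == (val i).+1) c (tnth t i) (tnth t j)
  = chain_prod c t.
Proof.
case: n t => [|n] t; first by rewrite big_ord0 tuple0.
set x0 := tnth t ord0; rewrite -(chain_prod_nth x0) size_tuple.
by apply: eq_bigr => i _; apply: eq_bigr => j _; rewrite !(tnth_nth x0).
Qed.

End ChainProduct.

Section BigTuples.
Variables (V : nmodType) (T : finType).

Lemma sum_tuple0 (F : seq T -> V) : \sum_(t : 0.-tuple T) F t = F [::].
Proof. by rewrite (big_pred1 [tuple]) // => t; apply/esym/eqP/tuple0. Qed.

Lemma sum_tupleS n (F : seq T -> V) :
  \sum_(t : n.+1.-tuple T) F t = \sum_(x : T) \sum_(w : n.-tuple T) F (x :: w).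
Proof.
rewrite pair_big (reindex (fun xw : T * n.-tuple T => [tuple of xw.1 :: xw.2])) //=.
exists (fun t : n.+1.-tuple T => (thead t, [tuple of behead t])).
  by move=> [x w] _; congr (_, _); apply: val_inj.
by move=> t _; rewrite [in RHS](tuple_eta t).
Qed.

Lemma sum_enum_val (F : T -> V) :
  \sum_(j < #|{: T}|) F (enum_val j) = \sum_(x : T) F x.
Proof.
rewrite [RHS](reindex (fun j : 'I_#|{: T}| => enum_val j)) //.
by exists enum_rank => x _; rewrite ?enum_valK ?enum_rankK.
Qed.

End BigTuples.

Lemma sum_by_fibers (V : pzSemiRingType) (I J : finType) (P : pred I)
    (f : I -> J) (X : J -> V) :
  \sum_(i | P i) X (f i) = \sum_(j : J) X j * #|[set i | P i && (f i == j)]|%:R.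
Proof.
rewrite (partition_big f xpredT) //; apply: eq_bigr => j _.
rewrite (eq_bigr (fun=> X j)) => [|i /andP[_ /eqP ->] //].
by rewrite sumr_const mulr_natr cardsE.
Qed.

Lemma mul_bdiag_mxcol (R : realFieldType) (T n : nat) (p q : 'I_T -> nat)
    (B : forall i, 'M[R]_(p i, q i)) (C : forall i, 'M[R]_(q i, n)) :
  bdiag B *m \mxcol_i C i = \mxcol_i (B i *m C i).
Proof.
rewrite /bdiag mul_mxblock_mxrow; apply/eq_mxcol => i.
rewrite (bigD1 i) //= big1 ?addr0 => [|j ji].
  by case: (i =P i) => // e; rewrite (eq_irrelevance (congr1 _ e) erefl) castmx_id.
by case: (i =P j) => [e|_]; [rewrite e eqxx in ji | rewrite mul0mx].
Qed.

Section WalkExpansion.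
Variables (R : realFieldType) (m K r : nat).
Variables (Adj : 'M[R]_m) (a : 'I_m -> 'I_K) (W : 'M[R]_(r, K)).
Variable S : 'cV[R]_r -> 'cV[R]_r -> R.

Lemma feat_col i : feat a W i = col (a i) W.
Proof.
apply/matrixP => p q; rewrite ord1 !mxE (bigD1 (a i)) //= mxE eqxx mulr1.
by rewrite big1 ?addr0 // => k ki; rewrite mxE (negbTE ki) mulr0.
Qed.

Lemma F1_entry p i : F1 a W p i = W p (a i).
Proof. by rewrite mxE feat_col mxE. Qed.

Definition step_weight (x y : 'I_m) : R := Adj x y * S (feat a W y) (feat a W x).

Definition walk_term (p : 'I_r) (s : seq 'I_m) : R :=
  (\prod_(x <- s) W p (a x)) * chain_prod step_weight s.

Hypothesis Adj_sym : Adj^T = Adj.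

Lemma Fiter_walk_sum k p i :
  Fiter Adj a W S k p i = \sum_(w : k.-tuple 'I_m) walk_term p (i :: w).
Proof.
elim: k i => [|k IH] i.
  rewrite (sum_tuple0 (fun w => walk_term p (i :: w))).
  by rewrite /walk_term big_seq1 mulr1 F1_entry.
rewrite (sum_tupleS _ (fun w => walk_term p (i :: w))) [LHS]mxE F1_entry mxE mulr_suml.
apply: eq_bigr => j _; rewrite IH !mulr_suml; apply: eq_bigr => w _.
have Adj_ji : Adj j i = Adj i j by rewrite -[in LHS]Adj_sym mxE.
rewrite /walk_term !big_cons chain_prod_cons2 /step_weight !mxE Adj_ji.
ring.
Qed.

Lemma fvec_walk_sum k p :
  fvec Adj a W S k.+1 p 0 = \sum_(t : k.+1.-tuple 'I_m) walk_term p t.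
Proof.
rewrite sum_tupleS mxE; apply: eq_bigr => i _.
by rewrite mxE mulr1 Fiter_walk_sum.
Qed.

Hypothesis Adj_bool : forall i j, Adj i j = 0 \/ Adj i j = 1.

Lemma prod_steps_is_walk n (t : n.-tuple 'I_m) :
  \prod_(i < n) \prod_(j < n | val j == (val i).+1) Adj (tnth t i) (tnth t j)
  = (is_walk Adj t)%:R.
Proof.
case: (boolP (is_walk Adj t)) => [/forallP walk_t | /forallPn [i /forallPn [j]]].
  rewrite big1 // => i _; rewrite big1 // => j ji.
  by move/forallP: (walk_t i) => /(_ j) /implyP /(_ ji) /eqP.
rewrite negb_imply => /andP [ji Aij]; rewrite (bigD1 i) //= (bigD1 j) //=.
by case: (Adj_bool (tnth t i) (tnth t j)) Aij => ->; rewrite ?eqxx // !mul0r.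
Qed.

Definition type_term (p : 'I_r) n (v : n.-tuple 'I_K) : R :=
  (\prod_(k < n) W p (tnth v k)) * walk_weight W S v.

Lemma walk_term_tuple p n (t : n.-tuple 'I_m) :
  walk_term p t = (is_walk Adj t)%:R * type_term p (walk_type a t).
Proof.
rewrite /walk_term /step_weight chain_prodM -!chain_prod_tnth prod_steps_is_walk.
rewrite big_tuple mulrCA /type_term /walk_weight; congr (_ * (_ * _)).
  by apply: eq_bigr => k _; rewrite tnth_mktuple.
by apply: eq_bigr => i _; apply: eq_bigr => j _; rewrite !tnth_mktuple !feat_col.
Qed.

Lemma fvec_walk_expansion n :
  fvec Adj a W S n.+1 = colprod W n.+1 *m Lam W S n.+1 *m cvec Adj a n.+1.
Proof.
apply/matrixP => p q; rewrite ord1 fvec_walk_sum mul_mx_diag !mxE.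
pose F (v : n.+1.-tuple 'I_K) :=
  type_term p v * #|[set t | is_walk Adj t && (walk_type a t == v)]|%:R.
transitivity (\sum_(j < ntup n.+1 K) F (enum_val j)); last first.
  by apply: eq_bigr => j _; rewrite !mxE.
rewrite sum_enum_val -sum_by_fibers [RHS]big_mkcond; apply: eq_bigr => t _.
by rewrite walk_term_tuple; case: is_walk; rewrite ?mul1r ?mul0r.
Qed.

End WalkExpansion.

Theorem theorem1 (R : realFieldType) (m K r : nat)
  (Adj : 'M[R]_m) (a : 'I_m -> 'I_K) (W : 'M[R]_(r, K))
  (S : 'cV[R]_r -> 'cV[R]_r -> R)
  (Hbin : forall i j, Adj i j = 0 \/ Adj i j = 1)
  (Hsym : Adj^T = Adj) :
  (forall n : nat, (0 < n)%N ->
     fvec Adj a W S n = colprod W n *m Lam W S n *m cvec Adj a n)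
  /\
  (forall T : nat, (0 < T)%N ->
     \mxcol_(i < T) fvec Adj a W S i.+1
     = bdiag (fun i : 'I_T => colprod W i.+1)
         *m \mxdiag_(i < T) Lam W S i.+1
         *m \mxcol_(i < T) cvec Adj a i.+1).
Proof.
split=> [[|n] // _ | T _]; first exact: fvec_walk_expansion.
rewrite -mulmxA mul_mxdiag_mxcol mul_bdiag_mxcol; apply/eq_mxcol => i.
by rewrite mulmxA fvec_walk_expansion.
Qed.
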